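(* Let $m_1,m_2\ge 3$ be integers, $m=m_1m_2$, and let $E$ be the $m_2\times m_2$ forward shift matrix (ones on the first superdiagonal, zeros elsewhere). Let $B_0,B_1$ be any real $m_1\times m_1$ matrices and define the $m\times m$ matrix \[ B=I\otimes B_0+E\otimes B_1+E^{\mathrm T}\otimes B_1^{\mathrm T}. \] Then \[ \mu_2[B]\le \max_{\zeta\in\mathbb C,\ |\zeta|=1}\ \mu_2[B_0+2\zeta B_1]. \]
   Context: $\otimes$ is the Kronecker product and $I$ the $m_2\times m_2$ identity. For a complex $k\times k$ matrix $A$, the logarithmic spectral norm is $\mu_2[A]=\lim_{t\downarrow 0}(\|I+tA\|_2-1)/t$, where $\|\cdot\|_2$ is the spectral norm; equivalently $\mu_2[A]$ is the largest eigenvalue of $\tfrac12(A+A^* )$. *)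

From HB Require Import structures.
From mathcomp Require Import all_boot all_order all_algebra.
From mathcomp Require Import complex mxtens.
From mathcomp Require Import classical_sets reals.
Set Implicit Arguments. Unset Strict Implicit. Unset Printing Implicit Defensive.
Import Order.TTheory GRing.Theory Num.Theory.
Local Open Scope ring_scope.
Local Open Scope complex_scope.

Definition cmx (R : realType) (m n : nat) (A : 'M[R]_(m, n)) : 'M[R[i]]_(m, n) :=
  map_mx (real_complex R) A.

Definition ctrmx (R : realType) (m n : nat) (A : 'M[R[i]]_(m, n)) : 'M[R[i]]_(n, m) :=
  (map_mx (@conjc R) A)^T.

Definition herm_part (R : realType) (k : nat) (A : 'M[R[i]]_k) : 'M[R[i]]_k :=
  (2%:R)^-1 *: (A + ctrmx A).

(* logarithmic spectral norm: largest eigenvalue of the (Hermitian) matrix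
   (A + ctrmx A) / 2; its eigenvalues are real, so we take their real parts. *)
Definition mu2 (R : realType) (k : nat) (A : 'M[R[i]]_k) : R :=
  sup [set complex.Re z | z in [set z | eigenvalue (herm_part A) z]]%classic.

Definition shiftE (R : realType) (n : nat) : 'M[R]_n :=
  \matrix_(i < n, j < n) ((j == i.+1 :> nat)%:R).

From HB Require Import structures.
From mathcomp Require Import all_boot all_order all_algebra.
From mathcomp Require Import complex mxtens spectral sesquilinear.
From mathcomp Require Import classical_sets reals.
From mathcomp Require Import ring.
Import Order.TTheory GRing.Theory Num.Theory.
Set Implicit Arguments. Unset Strict Implicit. Unset Printing Implicit Defensive.
Local Open Scope ring_scope.

(* Write H(z) for the Hermitian part of B0 + 2 z B1, which is
   Herm(B0) + z B1 + z^* B1^T, and let v be an eigenvector of Herm(B) for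
   lambda = mu2[B], cut into blocks v_0, ..., v_(m2-1) of size m1.  For the
   N = 2^(m2+1) powers z_k = w^k of a primitive N-th root of unity w
   (N > m2, so the shifts i -> i +- 1 never wrap around) put
   W_k = sum_i z_k^i v_i.  Orthogonality of the characters k -> z_k^i gives
   sum_k W_k H(z_k) W_k^* = N v Herm(B) v^* = N lambda |v|^2 and
   sum_k |W_k|^2 = N |v|^2, while W_k H(z_k) W_k^* <= mu2[B0 + 2 z_k B1] |W_k|^2
   for every k.  Hence lambda <= max_k mu2[B0 + 2 z_k B1]. *)

Lemma sum_expr_unity_root (F : idomainType) (z : F) N :
  z ^+ N = 1 -> z != 1 -> \sum_(k < N) z ^+ k = 0.
Proof.
move=> zN z_neq1; have := subrX1 z N; rewrite zN subrr => /esym/eqP.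
by rewrite mulf_eq0 subr_eq0 (negPf z_neq1) => /eqP.
Qed.

Section RootsOfUnity.
Variable C : numClosedFieldType.

Lemma norm_unity_root (z : C) N : (0 < N)%N -> z ^+ N = 1 -> `|z| = 1.
Proof.
move=> N_gt0 zN; apply/eqP; rewrite -(pexpr_eq1 N_gt0) ?normr_ge0 //.
by rewrite -normrX zN normr1.
Qed.

Lemma prim_root_orthogonal (w : C) N a c :
  N.-primitive_root w -> (a < N)%N -> (c < N)%N ->
  \sum_(k < N) (w ^+ k) ^+ a * ((w ^+ k) ^+ c)^* = (a == c)%:R * N%:R.
Proof.
move=> w_prim aN cN; have N_gt0 := prim_order_gt0 w_prim.
have wN := prim_expr_order w_prim.
have w_norm : `|w| = 1 := norm_unity_root N_gt0 wN.
have wc_neq0 : w ^+ c != 0 by rewrite -normr_eq0 normrX w_norm expr1n oner_eq0.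
set z := w ^+ a / w ^+ c.
have conj_inv (y : C) : `|y| = 1 -> y^* = y^-1.
  by move=> y1; rewrite invC_norm y1 expr1n invr1 mul1r.
have termE k : (w ^+ k) ^+ a * ((w ^+ k) ^+ c)^* = z ^+ k.
  rewrite conj_inv; last by rewrite !normrX w_norm !expr1n.
  by rewrite exprMn exprVn !(exprAC _ k).
rewrite (eq_bigr (fun k : 'I_N => z ^+ k)) => [|k _]; last exact: termE.
have [a_eq_c|a_neq_c] := eqVneq a c.
  rewrite /z a_eq_c divff // mul1r.
  by under eq_bigr do rewrite expr1n; rewrite sumr_const card_ord.
rewrite mul0r sum_expr_unity_root //.
  by rewrite exprMn exprVn -!exprM !(mulnC _ N) !exprM wN !expr1n invr1 mulr1.
rewrite -(inj_eq (mulIf wc_neq0)) divfK // mul1r (eq_prim_root_expr w_prim).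
by rewrite /eqn !modn_small ?(negPf a_neq_c).
Qed.

(* Iterated square roots of -1: primitive roots of unity of every order
   2^(p+1), with no cyclotomic theory needed. *)
Fixpoint dyadic_root (p : nat) : C :=
  if p is p'.+1 then sqrtC (dyadic_root p') else -1.

Lemma dyadic_rootX p : dyadic_root p ^+ (2 ^ p) = -1.
Proof.
elim: p => [|p IHp] /=; first by rewrite expn0 expr1.
by rewrite expnS exprM sqrtCK.
Qed.

Lemma dyadic_root_prim p : (2 ^ p.+1).-primitive_root (dyadic_root p).
Proof.
have rootN1 : dyadic_root p ^+ (2 ^ p.+1) = 1.
  by rewrite expnS mulnC exprM dyadic_rootX sqrrN expr1n.
have [m m_prim m_dvd] := prim_order_exists (expn_gt0 2 p.+1) rootN1.
have [j j_le m_eq] := dvdn_pfactor m p.+1 (isT : prime 2) m_dvd.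
rewrite m_eq in m_prim; suff -> : p.+1 = j by [].
apply/eqP; rewrite eqn_leq j_le andbT leqNgt; apply/negP => j_le_p.
move: (dvdn_exp2l 2 (j_le_p : (j <= p)%N)); rewrite (prim_order_dvd m_prim) dyadic_rootX.
by rewrite lt_eqF // (lt_trans (ltrN10 _) ltr01).
Qed.

Lemma prim_root_fourier_tridiag (w : C) N (i i' : nat) (c0 c1 cm : C) :
  N.-primitive_root w -> (i.+1 < N)%N -> (i'.+1 < N)%N ->
  \sum_(k < N) (w ^+ k) ^+ i * ((w ^+ k) ^+ i')^* *
    (c0 + w ^+ k * c1 + (w ^+ k)^* * cm)
  = N%:R * ((i == i')%:R * c0 + (i.+1 == i')%:R * c1 + (i == i'.+1)%:R * cm).
Proof.
move=> w_prim iSN i'SN; have [iN i'N] := (ltnW iSN, ltnW i'SN).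
rewrite (eq_bigr (fun k : 'I_N =>
    c0 * ((w ^+ k) ^+ i * ((w ^+ k) ^+ i')^*)
    + c1 * ((w ^+ k) ^+ i.+1 * ((w ^+ k) ^+ i')^*)
    + cm * ((w ^+ k) ^+ i * ((w ^+ k) ^+ i'.+1)^*))); last first.
  by move=> k _; rewrite !exprS rmorphM /=; ring.
by rewrite !big_split /= -!mulr_sumr !prim_root_orthogonal //; ring.
Qed.

End RootsOfUnity.

Local Open Scope complex_scope.

Section RayleighQuotient.
Variable R : realType.
Local Notation C := R[i].

Definition qform n (M : 'M[C]_n) (x : 'rV[C]_n) : C := (x *m M *m ctrmx x) 0 0.

Lemma ctrmxK m n (A : 'M[C]_(m, n)) : ctrmx (ctrmx A) = A.
Proof. by apply/matrixP => i j; rewrite !mxE conjcK. Qed.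

Lemma ctrmx_mul m n p (A : 'M[C]_(m, n)) (B : 'M[C]_(n, p)) :
  ctrmx (A *m B) = ctrmx B *m ctrmx A.
Proof. by rewrite /ctrmx map_mxM trmx_mul. Qed.

Lemma qformE n (M : 'M[C]_n) x :
  qform M x = \sum_p \sum_q x 0 p * M p q * (x 0 q)^*.
Proof.
rewrite /qform mxE exchange_big; apply: eq_bigr => q _.
by rewrite mxE mulr_suml; apply: eq_bigr => p _; rewrite !mxE.
Qed.

Lemma qform1E n (x : 'rV[C]_n) : qform 1%:M x = \sum_j `|x 0 j| ^+ 2.
Proof.
by rewrite /qform mulmx1 !mxE; apply: eq_bigr => j _; rewrite !mxE sqr_normc.
Qed.

Lemma qform1_ge0 n (x : 'rV[C]_n) : 0 <= qform 1%:M x.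
Proof. by rewrite qform1E sumr_ge0 // => j _; rewrite exprn_ge0. Qed.

Lemma qform1_gt0 n (x : 'rV[C]_n) : x != 0 -> 0 < qform 1%:M x.
Proof.
move=> x_neq0; have [j xj_neq0] : exists j, x 0 j != 0.
  apply/existsP; apply: contraNT x_neq0 => /existsPn x0.
  by apply/eqP/rowP => j; rewrite mxE; apply/eqP/negPn/x0.
rewrite qform1E (bigD1 j) //= ltr_wpDr ?exprn_gt0 ?normr_gt0 //.
by rewrite sumr_ge0 // => i _; rewrite exprn_ge0.
Qed.

Lemma qform_unitary_conj n (P : 'M[C]_n) (M : 'M[C]_n) x :
  qform (ctrmx P *m M *m P) x = qform M (x *m ctrmx P).
Proof. by rewrite /qform ctrmx_mul ctrmxK !mulmxA. Qed.

Lemma qform_eigen n (M : 'M[C]_n) (a : C) v :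
  v *m M = a *: v -> qform M v = a * qform 1%:M v.
Proof. by move=> v_eigen; rewrite /qform v_eigen -scalemxAl mxE mulmx1. Qed.

Lemma qform_diag_le n (d : 'rV[C]_n) (lam : R) u :
  (forall j, d 0 j <= lam%:C) -> qform (diag_mx d) u <= lam%:C * qform 1%:M u.
Proof.
move=> d_le; rewrite qform1E mulr_sumr /qform mul_mx_diag !mxE.
apply: ler_sum => j _; rewrite !mxE mulrAC -sqr_normc mulrC.
by rewrite ler_wpM2r ?exprn_ge0.
Qed.

Lemma herm_part_hermitian n (A : 'M[C]_n) : herm_part A \is hermsymmx.
Proof.
apply/is_hermitianmxP; rewrite expr0 scale1r; apply/matrixP => i j.
by rewrite !mxE rmorphM rmorphD fmorphV /= rmorph_nat conjCK [in RHS]addrC.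
Qed.

Lemma herm_part_spectral n (A : 'M[C]_n) : (0 < n)%N ->
  exists (lam : R) (v : 'rV[C]_n), [/\ v != 0, v *m herm_part A = lam%:C *: v &
    forall x, qform (herm_part A) x <= lam%:C * qform 1%:M x].
Proof.
move=> n_gt0; set H := herm_part A; have H_herm := herm_part_hermitian A.
set P := spectralmx H; set d := spectral_diag H.
have P_unitary : P \is unitarymx := spectral_unitarymx H.
have P_unit : P \in unitmx := unitarymx_unit P_unitary.
have P_inv : invmx P = ctrmx P by rewrite invmx_unitary // /ctrmx map_trmx.
have HE : H = ctrmx P *m diag_mx d *m P.
  by rewrite -P_inv; apply/orthomx_spectralP; apply: hermitian_normalmx.
have d_real j : d 0 j = (complex.Re (d 0 j))%:C.
  rewrite complexRe; apply/esym/Creal_ReP.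
  by have /mxOverP := hermitian_spectral_diag_real H_herm; apply.
have [j0 _ j0_max] := @arg_maxP _ R _ (Ordinal n_gt0) xpredT
  (fun j => complex.Re (d 0 j)) isT.
exists (complex.Re (d 0 j0)), (row j0 P); split.
- apply: contraNneq (@oner_neq0 C) => row0.
  have : row j0 (P *m ctrmx P) = 0 by rewrite row_mul row0 mul0mx.
  rewrite /ctrmx map_trmx (unitarymxP P_unitary) => /rowP/(_ j0).
  by rewrite !mxE eqxx /= => /eqP.
- rewrite -row_mul HE !mulmxA -P_inv mulmxV // mul1mx mul_diag_mx.
  by apply/rowP => k; rewrite !mxE -d_real.
move=> x; rewrite HE qform_unitary_conj.
have -> : qform 1%:M x = qform 1%:M (x *m ctrmx P).
  by rewrite -qform_unitary_conj mulmx1 -P_inv mulVmx.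
by apply: qform_diag_le => j; rewrite (d_real j) lecR; apply: j0_max.
Qed.

Lemma mu2_eq n (A : 'M[C]_n) (lam : R) (v : 'rV[C]_n) :
  v != 0 -> v *m herm_part A = lam%:C *: v ->
  (forall x, qform (herm_part A) x <= lam%:C * qform 1%:M x) -> mu2 A = lam.
Proof.
move=> v_neq0 v_eigen H_le; rewrite /mu2.
set S := [set _ | _ in _]%classic.
have S_lam : S lam by exists lam%:C => //=; apply/eigenvalueP; exists v.
have S_ub : ubound S lam.
  move=> _ [z /= /eigenvalueP [w w_eigen w_neq0] <-].
  have := H_le w; rewrite (qform_eigen w_eigen) ler_pM2r ?qform1_gt0 //.
  by rewrite lecE => /andP[].
apply/le_anti; rewrite ge_sup //=; last by exists lam.
by rewrite ub_le_sup //; exists lam.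
Qed.

Lemma mu2_eigenvector n (A : 'M[C]_n) : (0 < n)%N ->
  exists2 v : 'rV[C]_n, v != 0 & v *m herm_part A = (mu2 A)%:C *: v.
Proof.
move=> /(herm_part_spectral A) [lam [v [v_neq0 v_eigen H_le]]].
by exists v; rewrite ?(mu2_eq v_neq0 v_eigen H_le).
Qed.

Lemma qform_herm_part_le_mu2 n (A : 'M[C]_n) x : (0 < n)%N ->
  qform (herm_part A) x <= (mu2 A)%:C * qform 1%:M x.
Proof.
move=> /(herm_part_spectral A) [lam [v [v_neq0 v_eigen H_le]]].
by rewrite (mu2_eq v_neq0 v_eigen H_le).
Qed.

End RayleighQuotient.

Section BlockFourier.
Variable R : realType.
Local Notation C := R[i].

Variables m2 m1 : nat.
Local Notation tidx i l := (@mxtens_index m2 m1 (i, l)).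

Lemma sum_mxtens_index (F : 'I_(m2 * m1) -> C) :
  \sum_p F p = \sum_(i < m2) \sum_(l < m1) F (tidx i l).
Proof.
rewrite pair_big (reindex (@mxtens_index m2 m1)) /=; last first.
  by apply: onW_bij; exists (@mxtens_unindex m2 m1);
    [exact: mxtens_indexK | exact: mxtens_unindexK].
by apply: eq_bigr => -[i l].
Qed.

Lemma qform_mxtensE (M : 'M[C]_(m2 * m1)) v :
  qform M v = \sum_(i < m2) \sum_(l < m1) \sum_(i' < m2) \sum_(l' < m1)
    v 0 (tidx i l) * M (tidx i l) (tidx i' l') * (v 0 (tidx i' l'))^*.
Proof.
rewrite qformE sum_mxtens_index; apply: eq_bigr => i _; apply: eq_bigr => l _.
exact: sum_mxtens_index.
Qed.

Lemma sum_qform_fourier N (z : 'I_N -> C) (G : 'I_N -> 'M[C]_m1)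
    (M : 'M[C]_(m2 * m1)) (c : C) (v : 'rV[C]_(m2 * m1)) :
  (forall (i i' : 'I_m2) (l l' : 'I_m1),
     \sum_(k < N) z k ^+ i * (z k ^+ i')^* * G k l l'
     = c * M (tidx i l) (tidx i' l')) ->
  \sum_(k < N) qform (G k) (\row_l \sum_(i < m2) z k ^+ i * v 0 (tidx i l))
  = c * qform M v.
Proof.
move=> G_fourier; set X := fun i l => v 0 (tidx i l).
have qform_rowE k : qform (G k) (\row_l \sum_(i < m2) z k ^+ i * X i l) =
    \sum_l \sum_l' \sum_(i < m2) \sum_(i' < m2)
      z k ^+ i * X i l * G k l l' * (z k ^+ i' * X i' l')^*.
  rewrite qformE; apply: eq_bigr => l _; apply: eq_bigr => l' _.
  rewrite !mxE rmorph_sum !big_distrl /=; apply: eq_bigr => i _.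
  by rewrite big_distrr.
under eq_bigr do rewrite qform_rowE.
transitivity (\sum_(i < m2) \sum_(l < m1) \sum_(i' < m2) \sum_(l' < m1)
    X i l * (\sum_(k < N) z k ^+ i * (z k ^+ i')^* * G k l l') * (X i' l')^*).
  (* move the k-sum innermost: k l l' i i' ~> i l i' l' k *)
  rewrite exchange_big; under eq_bigr do rewrite exchange_big.
  under eq_bigr do under eq_bigr do rewrite exchange_big.
  under eq_bigr do under eq_bigr do under eq_bigr do rewrite exchange_big.
  under eq_bigr do rewrite exchange_big; rewrite exchange_big.
  under eq_bigr do under eq_bigr do rewrite exchange_big.
  apply: eq_bigr => i _; apply: eq_bigr => l _; apply: eq_bigr => i' _.
  apply: eq_bigr => l' _; rewrite big_distrr big_distrl /=.
  by apply: eq_bigr => k _; rewrite rmorphM /=; ring.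
rewrite qform_mxtensE mulr_sumr; apply: eq_bigr => i _; rewrite mulr_sumr.
apply: eq_bigr => l _; rewrite mulr_sumr; apply: eq_bigr => i' _.
by rewrite mulr_sumr; apply: eq_bigr => l' _; rewrite G_fourier /X; ring.
Qed.

Lemma scalar_mx_mxtensE (i i' : 'I_m2) (l l' : 'I_m1) :
  (1%:M : 'M[C]_(m2 * m1)) (tidx i l) (tidx i' l') = (i == i')%:R * 1%:M l l'.
Proof.
rewrite !mxE (inj_eq (can_inj (@mxtens_indexK _ _))) xpair_eqE.
by case: (i == i'); rewrite ?mul1r ?mul0r.
Qed.

End BlockFourier.

Section Pencil.
Variable R : realType.
Local Notation C := R[i].

Lemma conjcD (x y : C) : conjc (x + y) = conjc x + conjc y.
Proof. exact: rmorphD. Qed.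

Lemma conjcM (x y : C) : conjc (x * y) = conjc x * conjc y.
Proof. exact: rmorphM. Qed.

Lemma herm_part_pencilE n (B0 B1 : 'M[R]_n) (z : C) l l' :
  herm_part (cmx B0 + (2%:R * z) *: cmx B1) l l' =
  2^-1 * ((B0 l l')%:C + (B0 l' l)%:C) + z * (B1 l l')%:C + z^* * (B1 l' l)%:C.
Proof. by rewrite !mxE conjcD !conjcM !conjc_real conjc_nat; field. Qed.

Lemma herm_part_tens_blockE m2 m1 (B0 B1 : 'M[R]_m1) i i' l l' :
  herm_part (cmx (1%:M *t B0 + shiftE R m2 *t B1 + (shiftE R m2)^T *t B1^T))
    (mxtens_index (i, l)) (mxtens_index (i', l'))
  = (i == i')%:R * (2^-1 * ((B0 l l')%:C + (B0 l' l)%:C))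
    + (i.+1 == i' :> nat)%:R * (B1 l l')%:C + (i == i'.+1 :> nat)%:R * (B1 l' l)%:C.
Proof.
rewrite !mxE !mxtens_indexK !conjc_real !rmorphD !rmorphM !rmorph_nat.
by rewrite [(i' == i.+1 :> nat)]eq_sym /= [(i' == i)]eq_sym; field.
Qed.

End Pencil.

Theorem lemma2p2 (R : realType) (m1 m2 : nat) (hm1 : (3 <= m1)%N) (hm2 : (3 <= m2)%N)
    (B0 B1 : 'M[R]_m1) :
  let E := shiftE R m2 in
  let B : 'M[R]_(m2 * m1) :=
    (1%:M : 'M[R]_m2) *t B0 + E *t B1 + E^T *t B1^T in
  exists zeta : R[i], `|zeta| = 1 /\
    mu2 (cmx B) <= mu2 (cmx B0 + (2%:R * zeta) *: cmx B1).
Proof.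
move=> E B.
have m1_gt0 : (0 < m1)%N by apply: leq_trans hm1.
have m_gt0 : (0 < m2 * m1)%N by rewrite muln_gt0 m1_gt0 andbT (leq_trans _ hm2).
set N := (2 ^ m2.+1)%N; pose w : R[i] := dyadic_root _ m2.
have w_prim : N.-primitive_root w := dyadic_root_prim _ m2.
have N_gt0 := prim_order_gt0 w_prim.
have ltSN (i : 'I_m2) : (i.+1 < N)%N.
  exact: leq_ltn_trans (ltn_ord i) (ltnW (ltn_expl _ (isT : (1 < 2)%N))).
have ltN (i : 'I_m2) : (i < N)%N := ltnW (ltSN i).
pose K (k : 'I_N) := cmx B0 + (2%:R * w ^+ k) *: cmx B1.
have [k0 _ k0_max] := @arg_maxP _ R _ (Ordinal N_gt0) xpredT (fun k => mu2 (K k)) isT.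
exists (w ^+ k0); split.
  by rewrite normrX (norm_unity_root N_gt0 (prim_expr_order w_prim)) expr1n.
have [v v_neq0 v_eigen] := mu2_eigenvector (cmx B) m_gt0.
pose W (k : 'I_N) := \row_l \sum_(i < m2) (w ^+ k) ^+ i * v 0 (mxtens_index (i, l)).
have herm_sum :
    \sum_k qform (herm_part (K k)) (W k) = N%:R * qform (herm_part (cmx B)) v.
  apply: sum_qform_fourier => i i' l l'; under eq_bigr do rewrite herm_part_pencilE.
  by rewrite prim_root_fourier_tridiag ?ltSN // /B herm_part_tens_blockE.
have norm_sum : \sum_k qform 1%:M (W k) = N%:R * qform 1%:M v.
  apply: sum_qform_fourier => i i' l l'.
  rewrite -mulr_suml prim_root_orthogonal ?ltN // scalar_mx_mxtensE.
  by rewrite mulrCA mulrA.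
have :
    N%:R * qform (herm_part (cmx B)) v <= (mu2 (K k0))%:C * (N%:R * qform 1%:M v).
  rewrite -herm_sum -norm_sum mulr_sumr ler_sum // => k _.
  apply: le_trans (qform_herm_part_le_mu2 (K k) (W k) m1_gt0) _.
  by apply: ler_wpM2r; [exact: qform1_ge0 | rewrite lecR; apply: k0_max].
rewrite (qform_eigen v_eigen) mulrCA ler_pM2r ?lecR //.
by rewrite mulr_gt0 ?ltr0n ?qform1_gt0.
Qed.
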